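(* For all integers $n\ge 2$ and $1\le k<n$, the independence number of $G=H_B(n,k)$ is $\alpha(G)=\sum_{i=1}^n 2^{i-1}\binom{n}{i}-\binom{n}{k}$ (and $V_2$ is a maximum independent set).
   Context: Fix integers $n\ge 2$ and $1\le k<n$ and positive real numbers $x_1<x_2<\dots<x_n$. Let $\mathscr{B}_n=\{\pm x_1,\pm x_2,\dots,\pm x_{n-1},x_n\}$ (so $-x_n\notin\mathscr{B}_n$). Let $\phi(\mathscr{B}_n)$ be the family of all nonempty subsets $S\subseteq\mathscr{B}_n$ whose elements have pairwise distinct absolute values and whose element of largest absolute value is positive. Let $\mathscr{B}_n^+=\{x_1,\dots,x_n\}$, let $V_1$ be the set of all $k$-element subsets of $\mathscr{B}_n^+$, and let $V_2=\phi(\mathscr{B}_n)\setminus V_1$. For $A\in\phi(\mathscr{B}_n)$ put $A^\dagger=\{|a|:a\in A\}$. The bipartite Kneser B type-$k$ graph $H_B(n,k)$ is the simple graph with vertex set $V_1\cup V_2$ in which $X\in V_1$ and $Y\in V_2$ are adjacent if and only if $X\subseteq Y^\dagger$ or $Y^\dagger\subseteq X$, and there are no other edges. The independence number is the maximum size of a set of pairwise nonadjacent vertices. *)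

From mathcomp Require Import all_boot all_order.
Set Implicit Arguments. Unset Strict Implicit. Unset Printing Implicit Defensive.

(* The signed element  +x_(i+1)  is encoded as (i, true),  -x_(i+1) as (i, false),
   for i : 'I_n.  Since 0 < x_1 < ... < x_n, this encoding is injective and
   |(i,b)| corresponds to x_(i+1); comparing absolute values = comparing indices. *)
Notation signed n := ('I_n * bool)%type.

(* B_n = {+-x_1, ..., +-x_(n-1), x_n} : -x_n is excluded *)
Definition Bn (n : nat) : {set signed n} :=
  [set p : signed n | p.2 || (val p.1 < n.-1)].

Definition dagger n (A : {set signed n}) : {set 'I_n} := [set p.1 | p in A].

Definition in_phiB n (S : {set signed n}) : bool :=
  [&& S \subset Bn n, S != set0,
      [forall p in S, forall q in S, (p.1 == q.1) ==> (p == q)] &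
      [forall p in S, [forall q in S, val q.1 <= val p.1] ==> p.2]].

Definition phiB n : {set {set signed n}} := [set S : {set signed n} | in_phiB S].

Definition Bnplus n : {set signed n} := [set p : signed n | p.2].

Definition V1 n (k : nat) : {set {set signed n}} :=
  [set S : {set signed n} | (S \subset Bnplus n) && (#|S| == k)].
Definition V2 n (k : nat) : {set {set signed n}} := phiB n :\: V1 n k.

Definition HB_vertices n (k : nat) : {set {set signed n}} := V1 n k :|: V2 n k.

(* edges: X in V1, Y in V2, X subset Y^dagger or Y^dagger subset X
   (X is identified with X^dagger since X consists of positive elements) *)
Definition HB_edge1 n (k : nat) (X Y : {set signed n}) : bool :=
  [&& X \in V1 n k, Y \in V2 n k &
      (dagger X \subset dagger Y) || (dagger Y \subset dagger X)].

Definition HB_adj n (k : nat) (X Y : {set signed n}) : bool :=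
  HB_edge1 k X Y || HB_edge1 k Y X.

Definition HB_independent n (k : nat) (I : {set {set signed n}}) : bool :=
  (I \subset HB_vertices n k) &&
  [forall X in I, forall Y in I, ~~ HB_adj k X Y].

Definition HB_alpha n (k : nat) : nat :=
  \max_(I : {set {set signed n}} | HB_independent k I) #|I|.

From mathcomp Require Import all_boot all_order zify.

(* V2 is independent, since every edge has an end in V1.  Conversely an
   independent set I cannot contain both X in V1 and a neighbour of X, so any
   injection V1 -> V2 sending each X to one of its neighbours maps I :&: V1 into
   V2 :\: I, whence #|I| <= #|V2|.  Finally #|V2| = #|phi(B_n)| - #|V1|, and
   the elements of phi(B_n) with absolute values T are determined by an
   arbitrary choice of signs on T minus its maximum, giving 2^(#|T|-1) of them. *)

Set Implicit Arguments.
Unset Strict Implicit.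
Unset Printing Implicit Defensive.

Lemma independent_card_le (T : finType) (e : rel T) (A B I : {set T}) (f : T -> T) :
  I \subset A :|: B -> {in I &, forall x y, ~~ e x y} ->
  {in A &, injective f} -> {in A, forall x, f x \in B} -> {in A, forall x, e x (f x)} ->
  #|I| <= #|B|.
Proof.
move=> /subsetP sIAB indI injf fB adjf.
have f_notin x : x \in I :&: A -> f x \notin I.
  by rewrite inE => /andP[xI xA]; apply: contraL (adjf x xA); exact: indI.
rewrite -(cardsID A I) -(cardsID I B) addnC leq_add //.
  apply: subset_leq_card; apply/subsetP => x; rewrite !inE => /andP[xA xI].
  by rewrite xI andbT; move: (sIAB x xI); rewrite inE (negPf xA).
have injfI : {in I :&: A &, injective f}.
  by apply: sub_in2 injf => x; rewrite inE => /andP[].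
rewrite -(card_in_imset injfI).
apply: subset_leq_card; apply/subsetP => _ /imsetP[x xIA ->].
by rewrite inE f_notin //; move: xIA; rewrite inE => /andP[_ /fB].
Qed.

Section SignedSets.
Variable n : nat.
Implicit Types (S : {set signed n}) (T N : {set 'I_n}).

Definition signed_set T N : {set signed n} :=
  [set p | (p.1 \in T) && (p.2 == (p.1 \notin N))].

Definition negs S : {set 'I_n} := [set i | (i, false) \in S].

Lemma mem_dagger S i : reflect (exists b, (i, b) \in S) (i \in dagger S).
Proof.
apply: (iffP imsetP) => [[[j b] jbS /= ->]|[b ibS]]; first by exists b.
by exists (i, b).
Qed.

Lemma mem_negs S i : (i \in negs S) = ((i, false) \in S).
Proof. by rewrite inE. Qed.

Lemma mem_signed_set T N i b :
  ((i, b) \in signed_set T N) = (i \in T) && (b == (i \notin N)).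
Proof. by rewrite inE. Qed.

Lemma dagger_signed_set T N : dagger (signed_set T N) = T.
Proof.
apply/setP => i; apply/mem_dagger/idP => [[b]|iT]; first by rewrite inE => /andP[].
by exists (i \notin N); rewrite mem_signed_set iT eqxx.
Qed.

Lemma negs_signed_set T N : N \subset T -> negs (signed_set T N) = N.
Proof.
move=> /subsetP sNT; apply/setP => i; rewrite mem_negs mem_signed_set.
by case: (boolP (i \in N)) => [/sNT ->|_]; rewrite ?andbF.
Qed.

Lemma phiBP S :
  reflect [/\ S \subset Bn n, S != set0,
              {in S &, forall p q : signed n, p.1 = q.1 -> p = q} &
              {in S, forall p : signed n, {in S, forall q : signed n, q.1 <= p.1} -> p.2}]
          (S \in phiB n).
Proof.
rewrite inE /in_phiB; apply: (iffP and4P) => [[sSB S0 /forall_inP inj /forall_inP top]|].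
  split=> // [p q pS qS pq|p pS maxp].
    by move: (inj p pS) => /forall_inP/(_ q qS); rewrite pq eqxx => /eqP.
  by apply: (implyP (top p pS)); apply/forall_inP.
move=> [sSB S0 inj top]; split=> //.
  apply/forall_inP => p pS; apply/forall_inP => q qS.
  by apply/implyP => /eqP/(inj p q pS qS) ->.
apply/forall_inP => p pS; apply/implyP => /forall_inP maxp.
by apply: top => // q /maxp.
Qed.

Lemma phiB_signed_setE S : S \in phiB n -> S = signed_set (dagger S) (negs S).
Proof.
case/phiBP => _ _ inj _; apply/setP => -[i b]; rewrite mem_signed_set mem_negs.
apply/idP/andP => [ibS|[/mem_dagger[c icS] /eqP->]].
  split; first by apply/mem_dagger; exists b.
  case: b ibS => [itS|->//]; apply/eqP/esym/negP => ifS.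
  by have := inj _ _ itS ifS erefl.
case: (boolP ((i, false) \in S)) => //= ifS.
by case: c icS => // ifS'; rewrite ifS' in ifS.
Qed.

Lemma signed_set_phiB T N m :
  m \in T -> {in T, forall j : 'I_n, j <= m} -> N \subset T :\ m -> signed_set T N \in phiB n.
Proof.
move=> mT maxm /subsetP sNT; apply/phiBP; split.
- apply/subsetP => -[i b]; rewrite mem_signed_set inE /= => /andP[iT /eqP->].
  case: (boolP (i \in N)) => //= /sNT; rewrite !inE => /andP[im _].
  have := maxm i iT; have := ltn_ord m; have : nat_of_ord i != m by [].
  lia.
- by apply/set0Pn; exists (m, m \notin N); rewrite mem_signed_set mT eqxx.
- move=> [i b] [j c]; rewrite !mem_signed_set /= => /andP[_ /eqP->] /andP[_ /eqP->].
  by move->.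
- move=> [i b]; rewrite mem_signed_set /= => /andP[iT /eqP->] top.
  have mS : (m, m \notin N) \in signed_set T N by rewrite mem_signed_set mT eqxx.
  have /eqP im : i == m by rewrite -val_eqE /= eqn_leq maxm // (top _ mS).
  by rewrite im; apply: contraT; rewrite negbK => /sNT; rewrite !inE eqxx.
Qed.

Lemma exists_top T : T != set0 -> exists2 m, m \in T & {in T, forall j : 'I_n, j <= m}.
Proof.
case/set0Pn => i0 i0T; case: (arg_maxnP (fun i : 'I_n => val i) i0T) => m mT maxm.
by exists m.
Qed.

Lemma negs_phiB S (m : 'I_n) :
  S \in phiB n -> {in dagger S, forall j : 'I_n, j <= m} -> negs S \subset dagger S :\ m.
Proof.
case/phiBP => _ _ _ top maxm; apply/subsetP => i; rewrite mem_negs !inE => ifS.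
have iS : i \in dagger S by apply/mem_dagger; exists false.
rewrite iS andbT; apply: contraTneq ifS => ->; apply/negP => mfS.
suff : (m, false).2 by []; apply: (top _ mfS) => q qS /=; apply: maxm.
by apply/mem_dagger; exists q.2; case: q qS.
Qed.

Lemma phiB_fiber T m : m \in T -> {in T, forall j : 'I_n, j <= m} ->
  [set S in phiB n | dagger S == T] = signed_set T @: powerset (T :\ m).
Proof.
move=> mT maxm; apply/setP => S; rewrite inE; apply/andP/imsetP.
  case=> SphiB /eqP dS; exists (negs S); last by rewrite {1}(phiB_signed_setE SphiB) dS.
  by rewrite inE -dS; apply: negs_phiB; rewrite ?dS.
case=> N; rewrite inE => sNT ->; split; first exact: signed_set_phiB sNT.
by rewrite dagger_signed_set.
Qed.

Lemma card_phiB_fiber T : T != set0 -> #|[set S in phiB n | dagger S == T]| = 2 ^ #|T|.-1.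
Proof.
case/exists_top=> m mT maxm; rewrite (phiB_fiber mT maxm) card_in_imset.
  by rewrite card_powerset (cardsD1 m T) mT.
move=> N1 N2; rewrite !inE => sN1 sN2 eqN.
rewrite -(negs_signed_set (subset_trans sN1 (subsetDl _ _))) eqN.
by rewrite negs_signed_set // (subset_trans sN2 (subsetDl _ _)).
Qed.

Lemma dagger_phiB_neq0 S : S \in phiB n -> dagger S != set0.
Proof.
case/phiBP=> _ /set0Pn[[i b] ibS] _ _.
by apply/set0Pn; exists i; apply/mem_dagger; exists b.
Qed.

Lemma sum_nonempty_sets (F : nat -> nat) :
  \sum_(T : {set 'I_n} | T != set0) F #|T| = \sum_(1 <= i < n.+1) F i * 'C(n, i).
Proof.
have card_le T : #|T| <= n by rewrite -[n in _ <= n]card_ord max_card.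
rewrite (partition_big (fun T => inord #|T| : 'I_n.+1) (fun i => 0 < i)) /=; last first.
  by move=> T; rewrite -card_gt0 inordK // ltnS.
rewrite big_mkcond big_ord_recl /= add0n big_add1 /= big_mkord.
apply: eq_bigr => i _.
rewrite (eq_bigl (fun T => #|T| == i.+1)) => [|T].
  rewrite (eq_bigr (fun _ => F i.+1)) => [|T /eqP-> //].
  by rewrite sum_nat_cond_const card_draws card_ord mulnC.
rewrite -card_gt0 -val_eqE /= inordK ?ltnS //.
by rewrite /bump add1n; case: eqP => [->|_]; rewrite ?andbF.
Qed.

Lemma card_phiB : #|phiB n| = \sum_(1 <= i < n.+1) 2 ^ i.-1 * 'C(n, i).
Proof.
rewrite -sum_nonempty_sets -sum1_card.
rewrite (partition_big (@dagger n) (fun T => T != set0)) /=; last exact: dagger_phiB_neq0.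
by apply: eq_bigr => T T0; rewrite sum1dep_card card_phiB_fiber.
Qed.
End SignedSets.

Lemma eq_setD1_card (T : finType) (A B : {set T}) x :
  A :\ x = B :\ x -> #|A| = #|B| -> A = B.
Proof.
move=> eqD; rewrite (cardsD1 x A) (cardsD1 x B) eqD => /addIn eqx.
apply/setP => y; case: (eqVneq y x) => [->|yx]; first by move: eqx; do 2!case: (_ \in _).
by move/setP: eqD => /(_ y); rewrite !inE yx.
Qed.

Section V1.
Variables n k : nat.
Implicit Types (X : {set signed n}) (T : {set 'I_n}).

Lemma V1_signed_setE X : X \in V1 n k -> X = signed_set (dagger X) set0.
Proof.
rewrite inE => /andP[/subsetP sXB _]; apply/setP => -[i b].
rewrite mem_signed_set inE eqb_id; apply/idP/andP => [ibX|[/mem_dagger[c icX] ->]].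
  by split; [apply/mem_dagger; exists b | have := sXB _ ibX; rewrite inE].
by have := sXB _ icX; rewrite inE /= => ct; rewrite ct in icX.
Qed.

Lemma card_dagger_V1 X : X \in V1 n k -> #|dagger X| = k.
Proof.
rewrite inE => /andP[/subsetP sXB /eqP <-]; rewrite card_in_imset // => -[i b] [j c].
by move=> /sXB + /sXB; rewrite !inE /= => -> -> /= ->.
Qed.

Lemma signed_set_V1 T : #|T| = k -> signed_set T set0 \in V1 n k.
Proof.
move=> cardT; rewrite inE; apply/andP; split.
  by apply/subsetP => -[i b]; rewrite mem_signed_set in_set0 => /andP[_ /eqP->]; rewrite inE.
have -> : signed_set T set0 = [set (i, true) | i in T].
  apply/setP => -[i b]; rewrite mem_signed_set in_set0.
  apply/andP/imsetP => [[iT /eqP->]|[j jT [-> ->]]]; [by exists i | by []].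
by rewrite card_imset ?cardT // => i j [].
Qed.

Lemma card_V1 : #|V1 n k| = 'C(n, k).
Proof.
have dagger_inj : {in V1 n k &, injective (@dagger n)}.
  by move=> X Y XV1 YV1 eqXY; rewrite (V1_signed_setE XV1) (V1_signed_setE YV1) eqXY.
rewrite -(card_in_imset dagger_inj) -[n in 'C(n, _)]card_ord -card_draws.
apply: eq_card => T; rewrite inE; apply/imsetP/eqP => [[X XV1 ->]|cardT].
  exact: card_dagger_V1.
by exists (signed_set T set0); rewrite ?signed_set_V1 ?dagger_signed_set.
Qed.

Lemma V1_sub_phiB : 0 < k -> V1 n k \subset phiB n.
Proof.
move=> k_gt0; apply/subsetP => X XV1; rewrite (V1_signed_setE XV1).
have [|m mT maxm] := @exists_top n (dagger X).
  by rewrite -card_gt0 (card_dagger_V1 XV1).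
exact: signed_set_phiB mT maxm (sub0set _).
Qed.
End V1.

Section Matching.
Variables n k : nat.
Hypotheses (n_gt1 : 1 < n) (k_gt0 : 0 < k).
Implicit Types (X : {set signed n}) (T : {set 'I_n}).

Definition olast : 'I_n := Ordinal (etrans (ltn_predL n) (ltnW n_gt1)).
Definition ofirst : 'I_n := Ordinal (ltnW n_gt1).

Lemma leq_olast (j : 'I_n) : j <= olast.
Proof. by have := ltn_ord j; rewrite /=; lia. Qed.

Lemma ofirst_neq_olast : ofirst != olast.
Proof. by rewrite -val_eqE /=; lia. Qed.

(* Adds x_n and negates every other element; the only X for which this lands
   back in V1 is X = {x_n}, which is sent to {x_1, x_n} instead. *)
Definition match_V2 X : {set signed n} :=
  if dagger X == [set olast] then signed_set [set ofirst; olast] set0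
  else signed_set (olast |: dagger X) (dagger X :\ olast).

Lemma match_V2_phiB X : match_V2 X \in phiB n.
Proof.
have top_olast T : {in T, forall j : 'I_n, j <= olast} by move=> j _; apply: leq_olast.
rewrite /match_V2; case: ifP => _; apply: signed_set_phiB (top_olast _) _.
- exact: set22.
- exact: sub0set.
- exact: setU11.
- by apply: setSD; apply: subsetUr.
Qed.

Lemma negs_match_V2 X :
  negs (match_V2 X) = if dagger X == [set olast] then set0 else dagger X :\ olast.
Proof.
rewrite /match_V2; case: ifP => _; rewrite negs_signed_set ?sub0set //.
exact: subset_trans (subsetDl _ _) (subsetUr _ _).
Qed.

Lemma dagger_sub_match_V2 X : dagger X \subset dagger (match_V2 X).
Proof.
by rewrite /match_V2; case: ifP => [/eqP->|_]; rewrite dagger_signed_set ?subsetUr.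
Qed.

Lemma V1_setD1_olast_neq0 X :
  X \in V1 n k -> dagger X != [set olast] -> dagger X :\ olast != set0.
Proof.
move=> XV1 dX; rewrite setD_eq0 subset1 negb_or dX /=.
by rewrite -card_gt0 (card_dagger_V1 XV1).
Qed.

Lemma match_V2_notin_V1 X : X \in V1 n k -> match_V2 X \notin V1 n k.
Proof.
move=> XV1; apply/negP => mV1.
have negs0 : negs (match_V2 X) = set0.
  by rewrite (V1_signed_setE mV1) negs_signed_set ?sub0set.
move: negs0 (card_dagger_V1 mV1); rewrite negs_match_V2 /match_V2.
case: ifP => [/eqP dX _|dX /eqP]; last by rewrite (negPf (V1_setD1_olast_neq0 XV1 (negbT dX))).
rewrite dagger_signed_set cards2 ofirst_neq_olast => k2.
by move: (card_dagger_V1 XV1); rewrite dX cards1 -k2.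
Qed.

Lemma match_V2_inj : {in V1 n k &, injective match_V2}.
Proof.
move=> X Y XV1 YV1 eqXY; rewrite (V1_signed_setE XV1) (V1_signed_setE YV1); congr signed_set.
have := congr1 (@negs n) eqXY; rewrite !negs_match_V2.
have nX := V1_setD1_olast_neq0 XV1; have nY := V1_setD1_olast_neq0 YV1.
case: ifP => [/eqP->|/negbT/nX]; case: ifP => [/eqP->|/negbT/nY] //.
- by move=> nY' eq0; move: nY'; rewrite -eq0 eqxx.
- by move=> + eq0; rewrite eq0 eqxx.
move=> _ _ eqD; apply: eq_setD1_card eqD _.
by rewrite (card_dagger_V1 XV1) (card_dagger_V1 YV1).
Qed.

Lemma match_V2_in_V2 X : X \in V1 n k -> match_V2 X \in V2 n k.
Proof. by move=> XV1; rewrite inE match_V2_notin_V1 ?match_V2_phiB. Qed.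

Lemma HB_independent_card_le (I : {set {set signed n}}) :
  HB_independent k I -> #|I| <= #|V2 n k|.
Proof.
case/andP=> sIV /forall_inP indI.
apply: (independent_card_le (e := HB_adj k) sIV _ match_V2_inj match_V2_in_V2).
  by move=> X Y XI YI; move: (indI X XI) => /forall_inP/(_ Y YI).
move=> X XV1; rewrite /HB_adj /HB_edge1 XV1 match_V2_in_V2 //.
by rewrite dagger_sub_match_V2.
Qed.
End Matching.

Lemma V2_independent n k : HB_independent k (V2 n k).
Proof.
apply/andP; split; first exact: subsetUr.
apply/forall_inP => X; rewrite inE => /andP[XV1 _]; apply/forall_inP => Y.
by rewrite inE => /andP[YV1 _]; rewrite /HB_adj /HB_edge1 (negPf XV1) (negPf YV1).
Qed.

Theorem mainTheorem2 (n k : nat) (hn : 2 <= n) (hk1 : 1 <= k) (hkn : k < n) :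
  HB_alpha n k = (\sum_(1 <= i < n.+1) 2 ^ i.-1 * 'C(n, i)) - 'C(n, k)
  /\ HB_independent k (V2 n k)
  /\ #|V2 n k| = HB_alpha n k.
Proof.
have alphaE : HB_alpha n k = #|V2 n k|.
  apply/eqP; rewrite eqn_leq leq_bigmax_cond ?V2_independent // andbT.
  by apply/bigmax_leqP => I; apply: HB_independent_card_le.
have cardV2 : #|V2 n k| = (\sum_(1 <= i < n.+1) 2 ^ i.-1 * 'C(n, i)) - 'C(n, k).
  by rewrite cardsD (setIidPr (V1_sub_phiB n hk1)) card_phiB card_V1.
by rewrite alphaE; split; [exact: cardV2 | split; [exact: V2_independent |]].
Qed.
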